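(* Let $U=(u_1,\dots,u_n)$ and $V=(v_1,\dots,v_n)$ be complex vectors of the same dimension $n$, let $A=(a_1,\dots,a_{n'})$ be a complex vector, and set $R=(V,A)$, $W=(U,A)$ (vectors of dimension $N=n+n'$). Let $p_1,\dots,p_N:\mathbb C\to\mathbb C$ and $\mathcal G(\alpha_1,\dots,\alpha_N)=\det[p_i(\alpha_j)]_{i,j=1}^N/\det[\alpha_j^{i-1}]_{i,j=1}^N$. Assume the components of $R$ are distinct, the components of $W$ are distinct, and $\mathcal G(R)\ne0$. Then $$\frac{\mathcal G(W)}{\mathcal G(R)}=(-1)^{\binom n2}\det\Big[\frac{\mathcal G(R^{i,j})}{\mathcal G(R)(u_j-v_i)}\Big]_{i,j=1}^n\frac{\Delta(U;V)}{\Delta(U)\Delta(V)},$$ where $R^{i,j}$ is the vector $R$ with the component $v_i$ replaced by $u_j$.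
   Context: $\Delta(U)=\prod_{1\le i<j\le n}(u_j-u_i)$ and $\Delta(U;V)=\prod_{i=1}^n\prod_{j=1}^n(u_i-v_j)$. *)

From HB Require Import structures.
From mathcomp Require Import all_boot all_order all_algebra.
From mathcomp Require Import reals.
From mathcomp.real_closed Require Import complex.
Set Implicit Arguments. Unset Strict Implicit. Unset Printing Implicit Defensive.
Import Order.TTheory GRing.Theory Num.Theory.
Local Open Scope ring_scope.
Local Open Scope complex_scope.

Definition cplx (R : realType) : fieldType := R[i].

Section Defs.
Variable F : fieldType.

Definition Vdelta (n : nat) (U : 'I_n -> F) : F :=
  \prod_(i < n) \prod_(j < n | (i < j)%N) (U j - U i).

Definition Vdelta2 (n : nat) (U V : 'I_n -> F) : F :=
  \prod_(i < n) \prod_(j < n) (U i - V j).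

(* G(alpha) = det[p_i(alpha_j)] / det[alpha_j^(i-1)] (indices from 0 here) *)
Definition Gfun (N : nat) (p : 'I_N -> F -> F) (alpha : 'I_N -> F) : F :=
  \det (\matrix_(i < N, j < N) p i (alpha j)) /
  \det (\matrix_(i < N, j < N) alpha j ^+ i).

Definition vcat (n n' : nat) (X : 'I_n -> F) (A : 'I_n' -> F) : 'I_(n + n') -> F :=
  fun k => match split k with inl i => X i | inr j => A j end.

Definition vrepl (n : nat) (V : 'I_n -> F) (i : 'I_n) (x : F) : 'I_n -> F :=
  fun k => if k == i then x else V k.

End Defs.

From HB Require Import structures.
From mathcomp Require Import all_boot all_order all_algebra.
From mathcomp Require Import reals.
From mathcomp.real_closed Require Import complex.
From mathcomp Require Import ring.
Import Order.TTheory GRing.Theory Num.Theory.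
Local Open Scope ring_scope.

(* With M = [p_k(r_m)], the matrix M^-1 [p_k(w_m)] is block lower triangular
   with identity lower-right block, because W and R share their last n'
   entries; so det[p_k(w_m)] / det M is the determinant of its upper-left
   n x n block, whose (i, j) entry is det[p_k(R^{i,j}_m)] / det M by Cramer's
   rule.  Replacing v_i by u_j multiplies Delta(R) by
   prod_{k<>i} (u_j - r_k) / prod_{k<>i} (v_i - r_k); these factors pull out
   of the rows and columns of the determinant, and the products of
   differences left over combine with Delta(W) / Delta(R) into the sign and
   Delta(U;V) / (Delta(U) Delta(V)). *)

Set Implicit Arguments. Unset Strict Implicit. Unset Printing Implicit Defensive.

Section Determinants.
Variable F : fieldType.

Lemma cramer_rule n (M B : 'M[F]_n) i j : M \in unitmx ->
  (invmx M *m B) i j = \det (\matrix_(k, m) if m == i then B k j else M k m) / \det M.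
Proof.
move=> uM; rewrite /invmx uM -scalemxAl mxE mulrC; congr (_ * _).
rewrite mxE (expand_det_col _ i); apply: eq_bigr => k _; rewrite !mxE eqxx mulrC.
congr (_ * (_ * \det _)).
by apply/matrixP => a b; rewrite !mxE eq_sym (negbTE (neq_lift _ _)).
Qed.

Lemma det_share_rcols n n' (M B : 'M[F]_(n + n')) :
  M \in unitmx -> rsubmx B = rsubmx M ->
  \det B = \det M * \det (\matrix_(i, j)
    (\det (\matrix_(k, m) if m == lshift n' i then B k (lshift n' j) else M k m) / \det M)).
Proof.
move=> uM eqBM; set C := invmx M *m B.
have BMC : B = M *m C by rewrite /C mulmxA mulmxV // mul1mx.
have /matrixP rC : rsubmx C = rsubmx 1%:M.
  by rewrite -mulmx_rsub eqBM mulmx_rsub mulVmx.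
have urC : ursubmx C = 0.
  by apply/matrixP => i l; move: (rC (lshift n' i) l); rewrite !mxE eq_lrshift.
have drC : drsubmx C = 1%:M.
  by apply/matrixP => i l; move: (rC (rshift n i) l); rewrite !mxE eq_rshift.
rewrite {1}BMC det_mulmx -(submxK C) urC drC det_lblock det1 mulr1.
by congr (_ * \det _); apply/matrixP => i j; rewrite [RHS]mxE 2![LHS]mxE cramer_rule.
Qed.

Lemma det_scale_rows_cols n (a b : 'I_n -> F) (M : 'M[F]_n) :
  \det (\matrix_(i, j) (a i * M i j * b j)) = \prod_i a i * \det M * \prod_j b j.
Proof.
have -> : \matrix_(i, j) (a i * M i j * b j) = diag_mx (\row_i a i) *m M *m diag_mx (\row_j b j).
  by apply/matrixP => i j; rewrite mul_mx_diag mul_diag_mx !mxE.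
by rewrite !det_mulmx !det_diag; congr (_ * _ * _); apply: eq_bigr => i _; rewrite mxE.
Qed.

End Determinants.

Section Concatenation.
Variable F : fieldType.

Lemma vcat_lshift n n' (X : 'I_n -> F) (A : 'I_n' -> F) i : vcat X A (lshift n' i) = X i.
Proof. by rewrite /vcat (unsplitK (inl _ i)). Qed.

Lemma vcat_rshift n n' (X : 'I_n -> F) (A : 'I_n' -> F) l : vcat X A (rshift n l) = A l.
Proof. by rewrite /vcat (unsplitK (inr _ l)). Qed.

Lemma vcat_vrepl n n' (X : 'I_n -> F) (A : 'I_n' -> F) i x k :
  vcat (vrepl X i x) A k = if k == lshift n' i then x else vcat X A k.
Proof.
case: (split_ordP k) => [j|l] ->; last by rewrite !vcat_rshift eq_rlshift.
by rewrite !vcat_lshift eq_lshift /vrepl.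
Qed.

End Concatenation.

Section Vandermonde.
Variable F : fieldType.

Lemma det_Vandermonde_Vdelta N (a : 'I_N -> F) :
  \det (\matrix_(i < N, j < N) a j ^+ i) = Vdelta a.
Proof.
have -> : \matrix_(i < N, j < N) a j ^+ i = Vandermonde N (\row_j a j).
  by apply/matrixP => i j; rewrite !mxE.
by rewrite det_Vandermonde; apply: eq_bigr => i _; apply: eq_bigr => j _; rewrite !mxE.
Qed.

Lemma GfunE N (p : 'I_N -> F -> F) (a : 'I_N -> F) :
  Gfun p a = \det (\matrix_(k, m) p k (a m)) / Vdelta a.
Proof. by rewrite /Gfun det_Vandermonde_Vdelta. Qed.

Lemma Vdelta_neq0 N (a : 'I_N -> F) : injective a -> Vdelta a != 0.
Proof.
move=> inj_a; apply/prodf_neq0 => i _; apply/prodf_neq0 => j ltij.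
by rewrite subr_eq0; apply: contraTneq ltij => /inj_a ->; rewrite ltnn.
Qed.

Lemma prod_sign_pairs n : \prod_(i < n) \prod_(k < n | (i < k)%N) (-1 : F) = (-1) ^+ 'C(n, 2).
Proof.
elim: n => [|n IHn]; first by rewrite big_ord0.
rewrite big_ord_recl big_mkcond big_ord_recl /= mul1r.
rewrite (eq_bigr (fun _ => -1)) // prodr_const card_ord.
have -> : \prod_(i < n) \prod_(k < n.+1 | (bump 0 i < k)%N) (-1 : F) =
          \prod_(i < n) \prod_(k < n | (i < k)%N) (-1 : F).
  apply: eq_bigr => i _; rewrite big_mkcond big_ord_recl /= [RHS]big_mkcond mul1r.
  by apply: eq_bigr => k _; rewrite /bump /= !add1n ltnS.
by rewrite IHn -exprD binS bin1 addnC.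
Qed.

Lemma Vdelta_sqr n (V : 'I_n -> F) :
  (-1) ^+ 'C(n, 2) * Vdelta V ^+ 2 = \prod_i \prod_(k | k != i) (V i - V k).
Proof.
have split_neq i : \prod_(k | k != i) (V i - V k) =
    \prod_(k : 'I_n | (i < k)%N) (V i - V k) * \prod_(k : 'I_n | (k < i)%N) (V i - V k).
  rewrite (bigID (fun k : 'I_n => (i < k)%N)) /=.
  by congr (_ * _); apply: eq_bigl => k; rewrite -(inj_eq val_inj) /= neq_ltn; case: ltngtP.
rewrite (eq_bigr _ (fun i _ => split_neq i)) big_split /=.
have -> : \prod_(i < n) \prod_(k : 'I_n | (k < i)%N) (V i - V k) = Vdelta V.
  under eq_bigr do rewrite big_mkcond.
  by rewrite exchange_big; apply: eq_bigr => i _; rewrite [RHS]big_mkcond.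
have -> : \prod_(i < n) \prod_(k : 'I_n | (i < k)%N) (V i - V k) = (-1) ^+ 'C(n, 2) * Vdelta V.
  rewrite -prod_sign_pairs -big_split; apply: eq_bigr => i _; rewrite -big_split.
  by apply: eq_bigr => k _; rewrite /= mulN1r opprB.
by rewrite expr2 mulrA.
Qed.

Lemma Vdelta_bigD1 N (a : 'I_N -> F) (i : 'I_N) :
  Vdelta a = \prod_(k | k != i) \prod_(l : 'I_N | (k < l)%N && (l != i)) (a l - a k) *
             \prod_(l | l != i) ((-1) ^+ (i < l)%N * (a i - a l)).
Proof.
rewrite /Vdelta (bigD1 i) //=.
under [X in _ * X = _]eq_bigr => k _ do rewrite big_mkcond (bigD1 i) //=.
rewrite big_split /= mulrCA mulrA mulrC; congr (_ * _).
  by apply: eq_bigr => k _; rewrite big_mkcondl.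
rewrite mulrC big_mkcond (bigD1 i) //= ltnn mul1r -big_split /=.
apply: eq_bigr => l ne_li; case: ltngtP => [lt_li|lt_il|eq_il].
- by rewrite mulr1 expr1 mulN1r opprB.
- by rewrite expr0.
- by move: ne_li; rewrite (val_inj eq_il) eqxx.
Qed.

Lemma Vdelta_replace N (a b : 'I_N -> F) (i : 'I_N) :
  (forall l, l != i -> b l = a l) ->
  Vdelta b * \prod_(l | l != i) (a i - a l) = Vdelta a * \prod_(l | l != i) (b i - a l).
Proof.
move=> eq_ba; rewrite !(Vdelta_bigD1 _ i) !big_split /=.
have -> : \prod_(k | k != i) \prod_(l : 'I_N | (k < l)%N && (l != i)) (b l - b k) =
          \prod_(k | k != i) \prod_(l : 'I_N | (k < l)%N && (l != i)) (a l - a k).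
  by apply: eq_bigr => k ne_ki; apply: eq_bigr => l /andP[_ ne_li]; rewrite !eq_ba.
have -> : \prod_(l | l != i) (b i - b l) = \prod_(l | l != i) (b i - a l).
  by apply: eq_bigr => l ne_li; rewrite (eq_ba l).
ring.
Qed.

Lemma Vdelta_cat n n' (X : 'I_n -> F) (A : 'I_n' -> F) :
  Vdelta (vcat X A) =
  (-1) ^+ (n * n') * Vdelta X * Vdelta A * \prod_i \prod_l (X i - A l).
Proof.
rewrite /Vdelta big_split_ord /=.
have -> : \prod_(i < n) \prod_(j < n + n' | (lshift n' i < j)%N)
            (vcat X A j - vcat X A (lshift n' i)) =
          \prod_(i < n) (\prod_(j < n | (i < j)%N) (X j - X i) *
                         ((-1) ^+ n' * \prod_l (X i - A l))).
  apply: eq_bigr => i _; rewrite big_split_ord /=.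
  congr (_ * _); first by apply: eq_bigr => j _; rewrite !vcat_lshift.
  rewrite big_mkcond (eq_bigr (fun l => - (X i - A l))) ?prodrN ?card_ord // => l _.
  by rewrite /= vcat_lshift vcat_rshift ltn_addr // opprB.
have -> : \prod_(i < n') \prod_(j < n + n' | (rshift n i < j)%N)
            (vcat X A j - vcat X A (rshift n i)) =
          \prod_(i < n') \prod_(j < n' | (i < j)%N) (A j - A i).
  apply: eq_bigr => i _; rewrite big_split_ord /= big_pred0 ?mul1r; last first.
    by move=> k; apply/negbTE; rewrite -leqNgt (leq_trans (ltnW (ltn_ord k))) ?leq_addr.
  by apply: eq_big => [j|j _]; rewrite ?ltn_add2l // !vcat_rshift.
rewrite big_split /= prodrMl card_ord -exprM mulnC; ring.
Qed.

End Vandermonde.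

Section GfunRatio.
Variables (F : fieldType) (n n' : nat).
Variables (U V : 'I_n -> F) (A : 'I_n' -> F) (p : 'I_(n + n') -> F -> F).
Hypotheses (inj_R : injective (vcat V A)) (inj_W : injective (vcat U A)).
Hypotheses (GR_neq0 : Gfun p (vcat V A) != 0) (UV_neq : forall i j, U j != V i).

Local Notation R := (vcat V A).
Local Notation evalmx a := (\matrix_(k, m) p k (a m)).

Let c := \matrix_(i, j) (\det (evalmx (vcat (vrepl V i (U j)) A)) / \det (evalmx R)).
Let T i y := \prod_(b | b != lshift n' i) (y - R b).

Let detR_neq0 : \det (evalmx R) != 0.
Proof. by move: GR_neq0; rewrite GfunE mulf_eq0 negb_or => /andP[]. Qed.

Let VdeltaR_neq0 : Vdelta R != 0.
Proof. exact: Vdelta_neq0. Qed.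

Lemma det_evalmx_cat : \det (evalmx (vcat U A)) = \det (evalmx R) * \det c.
Proof.
rewrite (@det_share_rcols _ n n' (evalmx R)) ?unitmxE ?unitfE //; last first.
  by apply/matrixP => k l; rewrite !mxE !vcat_rshift.
congr (_ * \det _); apply/matrixP => i j; rewrite !mxE; congr (\det _ / _).
by apply/matrixP => k m; rewrite !mxE vcat_vrepl vcat_lshift; case: eqP.
Qed.

Lemma prod_sub_R_neq0 j : \prod_b (U j - R b) != 0.
Proof.
apply/prodf_neq0 => b _; rewrite subr_eq0; case: (split_ordP b) => [k|l] ->.
  by rewrite vcat_lshift UV_neq.
by rewrite vcat_rshift -(vcat_lshift U A) -(vcat_rshift U A) (inj_eq inj_W) eq_lrshift.
Qed.

Lemma prod_sub_R_bigD1 i y : \prod_b (y - R b) = (y - V i) * T i y.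
Proof. by rewrite (bigD1 (lshift n' i)) //= vcat_lshift. Qed.

Lemma Gfun_vrepl_ratio i j :
  Gfun p (vcat (vrepl V i (U j)) A) / (Gfun p R * (U j - V i)) =
  T i (V i) * c i j / \prod_b (U j - R b).
Proof.
have TV_neq0 : T i (V i) != 0.
  by apply/prodf_neq0 => b ne_bi; rewrite subr_eq0 -(vcat_lshift V A) (inj_eq inj_R) eq_sym.
have := prod_sub_R_neq0 j; rewrite (prod_sub_R_bigD1 i) mulf_eq0 negb_or.
case/andP=> UV_neq0 TU_neq0.
have eq_off l : l != lshift n' i -> vcat (vrepl V i (U j)) A l = R l.
  by move=> ne_li; rewrite vcat_vrepl (negbTE ne_li).
have := Vdelta_replace eq_off; rewrite vcat_vrepl eqxx vcat_lshift => VdeltaE.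
rewrite !GfunE /c mxE.
have -> : Vdelta (vcat (vrepl V i (U j)) A) = Vdelta R * T i (U j) / T i (V i).
  by rewrite -VdeltaE mulfK.
by field; rewrite TV_neq0 TU_neq0 UV_neq0 detR_neq0 VdeltaR_neq0.
Qed.

Lemma prod_T_diag :
  \prod_i T i (V i) = (-1) ^+ 'C(n, 2) * Vdelta V ^+ 2 * \prod_i \prod_l (V i - A l).
Proof.
rewrite Vdelta_sqr -big_split; apply: eq_bigr => i _; rewrite /T big_split_ord /=.
congr (_ * _).
  by apply: eq_big => [k|k _]; rewrite ?eq_lshift ?vcat_lshift.
by apply: eq_big => [l|l _]; rewrite ?eq_rlshift ?vcat_rshift.
Qed.

Lemma prod_prod_sub_R :
  \prod_j \prod_b (U j - R b) = Vdelta2 U V * \prod_j \prod_l (U j - A l).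
Proof.
rewrite /Vdelta2 -big_split; apply: eq_bigr => j _; rewrite big_split_ord /=.
by congr (_ * _); apply: eq_bigr => k _; rewrite ?vcat_lshift ?vcat_rshift.
Qed.

Theorem Gfun_cat_ratio :
  Gfun p (vcat U A) / Gfun p (vcat V A) =
  (-1) ^+ 'C(n, 2) *
  \det (\matrix_(i < n, j < n)
          (Gfun p (vcat (vrepl V i (U j)) A) /
           (Gfun p (vcat V A) * (U j - V i)))) *
  (Vdelta2 U V / (Vdelta U * Vdelta V)).
Proof.
have -> : \matrix_(i < n, j < n)
            (Gfun p (vcat (vrepl V i (U j)) A) / (Gfun p R * (U j - V i))) =
          \matrix_(i, j) (T i (V i) * c i j * (\prod_b (U j - R b))^-1).
  by apply/matrixP => i j; rewrite [LHS]mxE [RHS]mxE Gfun_vrepl_ratio.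
rewrite (det_scale_rows_cols (fun i => T i (V i)) (fun j => (\prod_b (U j - R b))^-1)).
rewrite prodfV prod_T_diag prod_prod_sub_R !GfunE det_evalmx_cat.
have := Vdelta_neq0 inj_W; have := VdeltaR_neq0; rewrite !Vdelta_cat.
rewrite !mulf_eq0 !negb_or => /andP[/andP[/andP[sign_neq0 VV_neq0] VA_neq0] YV_neq0].
move=> /andP[/andP[/andP[_ VU_neq0] _] YU_neq0].
have VUV_neq0 : Vdelta2 U V != 0.
  by apply/prodf_neq0 => i _; apply/prodf_neq0 => j _; rewrite subr_eq0 UV_neq.
have sqr_sign : (-1) ^+ 'C(n, 2) * (-1) ^+ 'C(n, 2) = 1 :> F by rewrite -expr2 sqrr_sign.
rewrite !mulrA sqr_sign mul1r.
by field; rewrite sign_neq0 VV_neq0 VA_neq0 YV_neq0 VU_neq0 YU_neq0 VUV_neq0 detR_neq0.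
Qed.

End GfunRatio.

Unset Implicit Arguments.

Theorem lemma4p7 (R : realType) (n n' : nat)
  (U V : 'I_n -> cplx R) (A : 'I_n' -> cplx R)
  (p : 'I_(n + n') -> cplx R -> cplx R) :
  injective (vcat V A) ->
  injective (vcat U A) ->
  Gfun p (vcat V A) != 0 ->
  (forall i j : 'I_n, U j != V i) ->
  Gfun p (vcat U A) / Gfun p (vcat V A) =
  (-1) ^+ 'C(n, 2) *
  \det (\matrix_(i < n, j < n)
          (Gfun p (vcat (vrepl V i (U j)) A) /
           (Gfun p (vcat V A) * (U j - V i)))) *
  (Vdelta2 U V / (Vdelta U * Vdelta V)).
Proof. exact: Gfun_cat_ratio. Qed.
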